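(* Let $G$ be an abelian group with torsion subgroup $T$. If both $T$ and $G/T$ are strongly co-Hopfian, then $G$ is strongly co-Hopfian.
   Context: All groups are abelian. A group $G$ is strongly co-Hopfian if for every endomorphism $f$ of $G$ there is $n\in\mathbb N$ with $f^n(G)=f^{n+1}(G)$. $T$ denotes the maximal torsion subgroup of $G$. *)

From HB Require Import structures.
From mathcomp Require Import all_boot all_order all_algebra.
From mathcomp Require Import boolp classical_sets.
Set Implicit Arguments. Unset Strict Implicit. Unset Printing Implicit Defensive.
Import GRing.Theory.
Local Open Scope ring_scope.

Definition torsion (G : zmodType) (x : G) : Prop :=
  exists n : nat, (0 < n)%N /\ x *+ n = 0.

Definition strongly_coHopfian (G : zmodType) : Prop :=
  forall f : {additive G -> G},
    exists n : nat, range (iter n f) = range (iter n.+1 f).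

From HB Require Import structures.
From mathcomp Require Import all_boot all_order all_algebra.
From mathcomp Require Import boolp classical_sets.
Set Implicit Arguments. Unset Strict Implicit. Unset Printing Implicit Defensive.
Local Open Scope classical_set_scope.
Local Open Scope ring_scope.
Import GRing.Theory.

(* An endomorphism f of G induces endomorphisms f_T of T and f_Q of G/T.  If
   the images of f_T stabilise from n on and those of f_Q from m on, then for
   y = f^(m+n)(x) write f^m(x) = f^(m+1)(z) + t with t torsion (stability of
   f_Q); then y = f^(m+n+1)(z) + f^n(t), and f^n(t) lies in f^(m+n+1)(T) by
   stability of f_T.  Hence f^(m+n)(G) = f^(m+n+1)(G). *)

Lemma range_iterS_sub (A : Type) (g : A -> A) n :
  range (iter n.+1 g) `<=` range (iter n g).
Proof. by move=> _ [a _ <-]; exists (g a) => //; rewrite iterSr. Qed.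

Lemma range_iter_stable (A : Type) (g : A -> A) n :
  range (iter n g) = range (iter n.+1 g) ->
  forall k, range (iter n g) `<=` range (iter (k + n) g).
Proof.
move=> stable; elim=> [//|k IH] _ /IH [a _ <-].
have : range (iter n g) (iter n g a) by exists a.
rewrite stable => -[b _ gb].
by exists b => //; rewrite [RHS]iterD -gb -iterD addnS addSn.
Qed.

Lemma iter_raddfD (U : zmodType) (f : {additive U -> U}) n (a b : U) :
  iter n f (a + b) = iter n f a + iter n f b.
Proof. by elim: n => //= n ->; rewrite raddfD. Qed.

Lemma raddf_torsion (U V : zmodType) (f : {additive U -> V}) (x : U) :
  torsion x -> torsion (f x).
Proof. by move=> [n [n_gt0 nx0]]; exists n; rewrite -raddfMn nx0 raddf0. Qed.

Section TorsionPart.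
Variables (G T : zmodType) (i : {additive T -> G}).
Hypothesis i_inj : injective i.
Hypothesis i_img : forall x : G, torsion x <-> exists t : T, i t = x.
Variable f : {additive G -> G}.

Definition torsion_endo (t : T) : T := xget 0 [set u | i u = f (i t)].

Lemma torsion_endoK t : i (torsion_endo t) = f (i t).
Proof.
have [u iu] : exists u, i u = f (i t) by apply/i_img/raddf_torsion/i_img; exists t.
exact: (@xgetI _ 0 [set u | i u = f (i t)] u iu).
Qed.

Lemma torsion_endo_is_zmod_morphism : zmod_morphism torsion_endo.
Proof. by move=> a b; apply: i_inj; rewrite raddfB !torsion_endoK !raddfB. Qed.

Definition torsion_additive : {additive T -> T} :=
  HB.pack torsion_endo
    (GRing.isZmodMorphism.Build T T torsion_endo torsion_endo_is_zmod_morphism).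

Lemma iter_torsion_additive n t :
  i (iter n torsion_additive t) = iter n f (i t).
Proof. by elim: n t => //= n IH t; rewrite -IH [LHS]torsion_endoK. Qed.

Lemma torsion_in_range_iter n :
  range (iter n torsion_additive) = range (iter n.+1 torsion_additive) ->
  forall (x : G) k, torsion x ->
  exists u : T, iter n f x = iter (k + n) f (i u).
Proof.
move=> stable x k /i_img [t <-].
have /(range_iter_stable stable k) [u _ ut] : range (iter n torsion_additive)
    (iter n torsion_additive t) by exists t.
by exists u; rewrite -!iter_torsion_additive ut.
Qed.

End TorsionPart.

Section QuotientPart.
Variables (G Q : zmodType) (p : {additive G -> Q}).
Hypothesis p_surj : forall q : Q, exists x : G, p x = q.
Hypothesis p_ker : forall x : G, p x = 0 <-> torsion x.
Variable f : {additive G -> G}.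

Definition quotient_endo (q : Q) : Q := p (f (xget 0 [set x | p x = q])).

Lemma quotient_endoE x : quotient_endo (p x) = p (f x).
Proof.
have lift_px : p (xget 0 [set y | p y = p x]) = p x.
  exact: (@xgetI _ 0 [set y | p y = p x] x erefl).
apply/eqP; rewrite -subr_eq0 -!raddfB; apply/eqP/p_ker/raddf_torsion/p_ker.
by rewrite raddfB lift_px subrr.
Qed.

Lemma quotient_endo_is_zmod_morphism : zmod_morphism quotient_endo.
Proof.
move=> a b; have [[x <-] [y <-]] := (p_surj a, p_surj b).
by rewrite -raddfB !quotient_endoE !raddfB.
Qed.

Definition quotient_additive : {additive Q -> Q} :=
  HB.pack quotient_endo
    (GRing.isZmodMorphism.Build Q Q quotient_endo quotient_endo_is_zmod_morphism).

Lemma iter_quotient_additive n x :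
  p (iter n f x) = iter n quotient_additive (p x).
Proof. by elim: n x => //= n IH x; rewrite -IH [RHS]quotient_endoE. Qed.

Lemma iter_mod_torsion m :
  range (iter m quotient_additive) = range (iter m.+1 quotient_additive) ->
  forall x : G, exists z : G, torsion (iter m f x - iter m.+1 f z).
Proof.
move=> stable x.
have : range (iter m quotient_additive) (iter m quotient_additive (p x)).
  by exists (p x).
rewrite stable => -[q _ qx]; have [z pz] := p_surj q.
by exists z; apply/p_ker; rewrite raddfB !iter_quotient_additive pz qx subrr.
Qed.

End QuotientPart.

Theorem mainTheorem4 (G T Q : zmodType)
    (i : {additive T -> G}) (p : {additive G -> Q})
    (i_inj : injective i)
    (i_img : forall x : G, torsion x <-> exists t : T, i t = x)
    (p_surj : forall q : Q, exists x : G, p x = q)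
    (p_ker : forall x : G, p x = 0 <-> torsion x) :
  strongly_coHopfian T -> strongly_coHopfian Q -> strongly_coHopfian G.
Proof.
move=> coHopfT coHopfQ f.
have [n stableT] := coHopfT (torsion_additive i_inj i_img f).
have [m stableQ] := coHopfQ (quotient_additive p_surj p_ker f).
exists (m + n)%N; rewrite eqEsubset; split; last exact: range_iterS_sub.
move=> _ [x _ <-].
have [z tor] := iter_mod_torsion stableQ x.
have [u fu] := torsion_in_range_iter stableT m.+1 tor.
exists (z + i u) => //.
rewrite [in RHS]addnC [RHS]iterD -(subrK (iter m.+1 f z) (iter m f x)).
by rewrite [RHS]iter_raddfD fu -iterD addrC addSn addnS addnC iter_raddfD.
Qed.
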